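(* Let $M>0$, $\beta^*>0$, and let $g$ be the log-normal density $g(t)=\frac{1}{t\sigma\sqrt{2\pi}}\exp\!\big(-\frac{(\ln t-\mu)^2}{2\sigma^2}\big)$ for $t>0$, $g(t)=0$ for $t\le0$ ($\mu\in\mathbb{R}$, $\sigma>0$). Let $I$ be the unique $C^1$ solution on $[0,\infty)$ of \[ I'(t)=\beta^*(M-I(t))\Big(I(t)-\int_0^t g(t-s)I(s)\,ds\Big),\qquad I(0)=I_0\in[0,M], \] and set $I_a(t)=I(t)-\int_0^t g(t-s)I(s)\,ds$. If $0<I_0\le M$, then $I_a(t)>0$ for all $t\ge0$; if $I_0=0$, then $I_a\equiv0$.
   Context: $I_a$ represents the number of actively infected individuals. *)

From Stdlib Require Import Reals.
From Coquelicot Require Import Coquelicot.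
Open Scope R_scope.

Definition lognormal (mu sigma : R) (t : R) : R :=
  if Rle_dec t 0 then 0
  else / (t * sigma * sqrt (2 * PI)) * exp (- (ln t - mu) ^ 2 / (2 * sigma ^ 2)).

Definition conv (g I : R -> R) (t : R) : R :=
  RInt (fun s => g (t - s) * I s) 0 t.

Definition Ia (g I : R -> R) (t : R) : R := I t - conv g I t.

(* f is C^1 on [0, +oo) with derivative f' there: two-sided derivative at
   every t > 0, right derivative at 0, and f' continuous on [0, +oo)
   (right-continuous at 0). Values of f on (-oo,0) are irrelevant. *)
Definition C1_on_nonneg_with_deriv (f f' : R -> R) : Prop :=
  (forall t, 0 < t -> is_derive f t (f' t)) /\
  filterlim (fun h => (f h - f 0) / h) (at_right 0) (locally (f' 0)) /\
  (forall t, 0 < t -> continuous f' t) /\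
  filterlim f' (at_right 0) (locally (f' 0)).

From Stdlib Require Import Reals Lra Psatz Classical.
From Coquelicot Require Import Coquelicot.
Open Scope R_scope.

(* Write Ia = I - g * I. The log-normal kernel g is nonnegative and has mass
   int_0^t g < 1 on every [0, t] (that mass is a value of the normal
   distribution function, and int_0^x exp (- w^2) dw < sqrt PI / 2). Hence
   Ia t > 0 as soon as I t > 0 is the maximum of I on [0, t], because then
   (g * I) t <= I t int_0^t g < I t.
   If I 0 is 0 or M, then |(I - I 0)'| <= L sup_[0,t] |I - I 0| on bounded
   intervals, so I stays equal to I 0: Ia vanishes, resp. is positive. If
   0 < I 0 < M, then (M - I)' >= - K (M - I) keeps M - I positive, so
   Ia = I' / (beta (M - I)) is continuous on (0, +oo) and positive near 0.
   At a first zero ts of Ia the derivative I' would be >= 0 on [0, ts], so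
   I ts would be the maximum of I on [0, ts] and Ia ts > 0, a contradiction. *)

(** * Real analysis on [0, +oo) *)

Lemma filterlim_gt0 {T : Type} (F : (T -> Prop) -> Prop) (f : T -> R) l :
  filterlim f F (locally l) -> 0 < l -> F (fun x => 0 < f x).
Proof.
  intros Hf Hl; apply Hf; exists (mkposreal _ Hl); intros v Hv.
  change (Rabs (v - l) < l) in Hv; apply Rabs_def2 in Hv; lra.
Qed.

Lemma le_of_deriv_ge0 (f df : R -> R) a b : a <= b ->
  (forall x, a < x < b -> is_derive f x (df x)) ->
  (forall x, a <= x <= b -> continuous f x) ->
  (forall x, a <= x <= b -> 0 <= df x) -> f a <= f b.
Proof.
  intros Hab Hd Hc Hpos.
  destruct (MVT_gen f a b df) as [c [Hcab Hmvt]]; rewrite Rmin_left, Rmax_right in * by lra.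
  - exact Hd.
  - intros x Hx; apply continuity_pt_filterlim, Hc, Hx.
  - pose proof (Hpos c Hcab); nra.
Qed.

(* Extending f by the constant f 0 to the left of 0 gives a function that is
   continuous at 0 in the two-sided sense required by [MVT_gen]. *)
Definition ext_nonneg (f : R -> R) (s : R) : R := f (Rmax 0 s).

Lemma ext_nonneg_eq f s : 0 <= s -> ext_nonneg f s = f s.
Proof. intros Hs; unfold ext_nonneg; rewrite Rmax_right; auto. Qed.

Lemma is_derive_ext_nonneg f x l : 0 < x -> is_derive f x l -> is_derive (ext_nonneg f) x l.
Proof.
  intros Hx Hd; apply is_derive_ext_loc with f; [|exact Hd].
  apply locally_interval with 0 p_infty; simpl; auto.
  intros y Hy _; rewrite ext_nonneg_eq; lra.
Qed.

Lemma right_continuous_of_right_deriv (f : R -> R) l :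
  filterlim (fun h => (f h - f 0) / h) (at_right 0) (locally l) ->
  filterlim f (at_right 0) (locally (f 0)).
Proof.
  intros Hl.
  assert (H : filterlim (fun h => plus (f 0) (mult h ((f h - f 0) / h))) (at_right 0)
                (locally (plus (f 0) (mult 0 l)))).
  { apply (filterlim_comp_2 (G := locally (f 0)) (H := locally (mult 0 l))
             (fun _ => f 0) _ plus);
      [apply filterlim_const| |apply (filterlim_plus (V := R_NormedModule))].
    apply (filterlim_comp_2 (G := locally 0) (H := locally l) (fun h => h) _ mult);
      [apply filter_le_within | exact Hl | apply (filterlim_mult (K := R_AbsRing))]. }
  replace (plus (f 0) (mult 0 l)) with (f 0) in H by (unfold plus, mult; simpl; ring).
  refine (filterlim_within_ext _ _ _ _ H); intros h Hh.
  unfold plus, mult; simpl; field; apply Rgt_not_eq, Hh.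
Qed.

Lemma continuous_ext_nonneg f :
  (forall t, 0 < t -> continuous f t) -> filterlim f (at_right 0) (locally (f 0)) ->
  forall x, continuous (ext_nonneg f) x.
Proof.
  intros Hc H0 x; destruct (Rtotal_order x 0) as [Hx|[->|Hx]].
  - apply continuous_ext_loc with (fun _ => f 0); [|apply continuous_const].
    apply locally_interval with m_infty 0; simpl; auto.
    intros y _ Hy; unfold ext_nonneg; rewrite Rmax_left; lra.
  - intros P HP; unfold ext_nonneg at 1 in HP; rewrite Rmax_left in HP by lra.
    destruct (H0 P HP) as [d Hd]; exists d; intros y Hy; unfold ext_nonneg.
    destruct (Rle_dec y 0) as [Hy0|Hy0].
    + rewrite Rmax_left by lra; apply locally_singleton, HP.
    + rewrite Rmax_right by lra; apply Hd; auto; lra.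
  - apply continuous_ext_loc with f; [|apply Hc, Hx].
    apply locally_interval with 0 p_infty; simpl; auto.
    intros y Hy _; rewrite ext_nonneg_eq; lra.
Qed.

Lemma ge0_of_gt0_before (f : R -> R) ts : 0 < ts -> continuous f ts ->
  (forall s, 0 <= s < ts -> 0 < f s) -> 0 <= f ts.
Proof.
  intros Hts Hc Hbefore; apply Rnot_lt_le; intros Hneg.
  destruct (filterlim_gt0 (locally ts) (fun s => - f s) (- f ts)) as [e He];
    [apply (continuous_opp (V := R_NormedModule)), Hc | lra |].
  pose proof (cond_pos e).
  set (s := Rmax (ts / 2) (ts - e / 2)).
  assert (ts / 2 <= s) by apply Rmax_l; assert (ts - e / 2 <= s) by apply Rmax_r.
  assert (s < ts) by (apply Rmax_lub_lt; lra).
  enough (0 < - f s) by (pose proof (Hbefore s ltac:(lra)); lra).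
  apply He; change (Rabs (s - ts) < e); rewrite Rabs_left1; lra.
Qed.

Lemma first_root (f : R -> R) t1 : 0 <= t1 -> 0 < f 0 -> f t1 <= 0 ->
  at_right 0 (fun s => 0 < f s) -> (forall t, 0 < t <= t1 -> continuous f t) ->
  exists ts, 0 < ts <= t1 /\ f ts = 0 /\ forall s, 0 <= s < ts -> 0 < f s.
Proof.
  intros Ht1 Hf0 Hft1 [d Hd] Hc.
  assert (Ht1p : 0 < t1) by (destruct (Req_dec t1 0) as [->|]; lra).
  set (E := fun t => 0 <= t <= t1 /\ forall s, 0 <= s <= t -> 0 < f s).
  assert (HE0 : E 0) by (split; [lra | intros s Hs; replace s with 0 by lra; exact Hf0]).
  destruct (completeness E) as [ts [Hub Hlub]]; [exists t1; intros t Ht; apply Ht | now exists 0 |].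
  assert (Hts1 : ts <= t1) by (apply Hlub; intros t Ht; apply Ht).
  assert (Hbefore : forall s, 0 <= s < ts -> 0 < f s).
  { intros s Hs; apply NNPP; intros Hn; enough (ts <= s) by lra.
    apply Hlub; intros t [Ht Hft]; destruct (Rle_or_lt t s) as [|Hst]; auto.
    exfalso; apply Hn, Hft; lra. }
  assert (Hts0 : 0 < ts).
  { pose proof (cond_pos d).
    set (t' := Rmin (d / 2) t1).
    assert (t' <= d / 2) by apply Rmin_l; assert (t' <= t1) by apply Rmin_r.
    assert (0 < t') by (apply Rmin_pos; lra).
    enough (t' <= ts) by lra.
    apply Hub; split; [lra|]; intros s Hs.
    destruct (Req_dec s 0) as [->|Hs0]; [exact Hf0|].
    apply Hd; [change (Rabs (s - 0) < d); rewrite Rminus_0_r, Rabs_pos_eq|]; lra. }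
  assert (Hle : f ts <= 0).
  { destruct (Req_dec ts t1) as [->|Hne]; [exact Hft1|].
    apply Rnot_lt_le; intros Hpos.
    destruct (filterlim_gt0 (locally ts) f (f ts) (Hc ts ltac:(lra)) Hpos) as [e He].
    pose proof (cond_pos e).
    set (t' := Rmin (ts + e / 2) t1).
    assert (t' <= ts + e / 2) by apply Rmin_l; assert (t' <= t1) by apply Rmin_r.
    assert (ts < t') by (apply Rmin_glb_lt; lra).
    enough (t' <= ts) by lra.
    apply Hub; split; [lra|]; intros s Hs.
    destruct (Rlt_or_le s ts); [apply Hbefore; lra|].
    apply He; change (Rabs (s - ts) < e); rewrite Rabs_pos_eq; lra. }
  exists ts; split; [lra|]; split; [|exact Hbefore].
  apply Rle_antisym; [exact Hle|].
  apply ge0_of_gt0_before; [lra | apply Hc; lra | exact Hbefore].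
Qed.

Section DerivDominated.

Variables f df : R -> R.
Hypothesis f_cont : forall x, continuous f x.
Hypothesis f_deriv : forall x, 0 < x -> is_derive f x (df x).

Lemma eq0_of_deriv_dominated_step L d t0 t1 :
  (forall t m, 0 <= t <= t1 -> (forall s, 0 <= s <= t -> Rabs (f s) <= m) ->
     Rabs (df t) <= L * m) ->
  L * d <= / 2 -> 0 <= t0 <= t1 -> t1 - t0 <= d ->
  (forall s, 0 <= s <= t0 -> f s = 0) -> forall s, 0 <= s <= t1 -> f s = 0.
Proof.
  intros HL HLd Ht01 Hd Hf0.
  destruct (continuity_ab_maj (fun s => Rabs (f s)) 0 t1) as [p [Hp Hp01]]; [lra| |].
  { intros c _; apply continuity_pt_filterlim, continuous_Rabs_comp, f_cont. }
  set (m := Rabs (f p)) in *; pose proof (Rabs_pos (f p)).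
  assert (Hm : m <= 0).
  { destruct (Rle_or_lt p t0) as [Hpt0|Hpt0].
    { unfold m; rewrite (Hf0 p), Rabs_R0 by lra; lra. }
    (* on [t0, p] the mean value theorem gives m <= L m (p - t0) <= m / 2 *)
    destruct (MVT_gen f t0 p df) as [c [Hc Hmvt]]; rewrite Rmin_left, Rmax_right in * by lra.
    - intros x Hx; apply f_deriv; lra.
    - intros x _; apply continuity_pt_filterlim, f_cont.
    - rewrite (Hf0 t0), Rminus_0_r in Hmvt by lra.
      assert (Hdc : Rabs (df c) <= L * m) by (apply HL; [lra | intros s Hs; apply Hp; lra]).
      assert (Hmc : m = Rabs (df c) * (p - t0))
        by (unfold m; rewrite Hmvt, Rabs_mult, (Rabs_pos_eq (p - t0)) by lra; reflexivity).
      pose proof (Rabs_pos (df c)); nra. }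
  intros s Hs; pose proof (Hp s Hs).
  destruct (Req_dec (f s) 0) as [|Hne]; [assumption|].
  pose proof (Rabs_pos_lt _ Hne); lra.
Qed.

Lemma eq0_of_deriv_dominated :
  f 0 = 0 ->
  (forall T, 0 <= T -> exists L, forall t m, 0 <= t <= T ->
     (forall s, 0 <= s <= t -> Rabs (f s) <= m) -> Rabs (df t) <= L * m) ->
  forall t, 0 <= t -> f t = 0.
Proof.
  intros Hf0 HL t Ht; destruct (HL t Ht) as [L HLt].
  set (d := / (2 * (Rabs L + 1))); pose proof (Rabs_pos L); pose proof (Rle_abs L).
  assert (Hd : 0 < d) by (apply Rinv_0_lt_compat; lra).
  assert (HLd : L * d <= / 2).
  { apply Rmult_le_reg_r with (2 * (Rabs L + 1)); [lra|].
    unfold d; rewrite Rmult_assoc, Rinv_l by lra; lra. }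
  assert (Hsteps : forall n s, 0 <= s <= Rmin (INR n * d) t -> f s = 0).
  { induction n as [|n IH]; intros s Hs.
    { rewrite Rmult_0_l, Rmin_left in Hs by lra; replace s with 0 by lra; exact Hf0. }
    pose proof (pos_INR n); rewrite S_INR in *.
    apply (eq0_of_deriv_dominated_step L d (Rmin (INR n * d) t) (Rmin ((INR n + 1) * d) t)); auto.
    - intros t' m Ht'; apply HLt; pose proof (Rmin_r ((INR n + 1) * d) t); lra.
    - split; [apply Rmin_glb; nra|].
      apply Rle_min_compat_r, Rmult_le_compat_r; lra.
    - unfold Rmin; repeat destruct Rle_dec; nra. }
  destruct (INR_archimed d t Hd) as [n Hn].
  apply (Hsteps n); rewrite Rmin_right; lra.
Qed.

End DerivDominated.

Lemma gt0_of_deriv_ge_neg_mul (y dy : R -> R) :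
  (forall x, continuous y x) -> (forall x, 0 < x -> is_derive y x (dy x)) -> 0 < y 0 ->
  (forall T, 0 <= T -> exists K, forall t, 0 <= t <= T -> 0 <= y t -> - (K * y t) <= dy t) ->
  forall t, 0 <= t -> 0 < y t.
Proof.
  intros Hc Hd Hy0 HK t1 Ht1; apply Rnot_le_lt; intros Hyt1.
  destruct (first_root y t1) as [ts [Hts [Hyts Hbefore]]]; auto.
  { apply filter_le_within, (filterlim_gt0 (locally 0) y (y 0)); [apply Hc | exact Hy0]. }
  destruct (HK ts ltac:(lra)) as [K HKts].
  assert (Hmono : y 0 * exp (K * 0) <= y ts * exp (K * ts)).
  { apply (le_of_deriv_ge0 (fun s => y s * exp (K * s))
             (fun s => dy s * exp (K * s) + y s * (K * exp (K * s)))); [lra| | |].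
    - intros x Hx; apply (is_derive_mult (K := R_AbsRing) y (fun s => exp (K * s)));
        [apply Hd; lra | auto_derive; auto; ring | intros; apply Rmult_comm].
    - intros x _; apply (continuous_mult (K := R_AbsRing)); [apply Hc|].
      apply (ex_derive_continuous (V := R_NormedModule)); auto_derive; auto.
    - intros x Hx; assert (Hyx : 0 <= y x).
      { destruct (Req_dec x ts) as [->|]; [lra | left; apply Hbefore; lra]. }
      pose proof (HKts x Hx Hyx); pose proof (exp_pos (K * x)); nra. }
  rewrite Hyts, Rmult_0_r, Rmult_0_l, exp_0 in Hmono; lra.
Qed.

(** * Convolution with a kernel of mass less than one *)

Section Kernel.

Variable g : R -> R.
Hypothesis g_cont : forall x, continuous g x.
Hypothesis g_ge0 : forall x, 0 <= g x.
Hypothesis g_mass_lt1 : forall t, 0 <= t -> RInt g 0 t < 1.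

Lemma continuous_kernel_shift t s : continuous (fun s => g (t - s)) s.
Proof.
  apply (continuous_comp (fun s => t - s) g); [|apply g_cont].
  apply (ex_derive_continuous (V := R_NormedModule)); auto_derive; auto.
Qed.

Lemma ex_RInt_kernel_shift_mul (I : R -> R) t :
  (forall x, continuous (ext_nonneg I) x) -> 0 <= t ->
  ex_RInt (fun s => g (t - s) * I s) 0 t.
Proof.
  intros HI Ht; apply (ex_RInt_ext (fun s => g (t - s) * ext_nonneg I s)).
  { intros x Hx; rewrite Rmin_left, Rmax_right in Hx by lra; rewrite ext_nonneg_eq; lra. }
  apply (ex_RInt_continuous (V := R_CompleteNormedModule)); intros x _.
  apply (continuous_mult (K := R_AbsRing)); [apply continuous_kernel_shift | apply HI].
Qed.

Lemma RInt_kernel_shift_mul_const t c :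
  RInt (fun s => g (t - s) * c) 0 t = c * RInt g 0 t.
Proof.
  assert (Hg : forall a b, ex_RInt g a b)
    by (intros; apply (ex_RInt_continuous (V := R_CompleteNormedModule)); intros; apply g_cont).
  rewrite (RInt_ext (V := R_CompleteNormedModule) _
             (fun y => scal (- c) (scal (-1) (g (-1 * y + t))))).
  2:{ intros x _; unfold scal; simpl; unfold mult; simpl.
      replace (-1 * x + t) with (t - x) by ring; ring. }
  rewrite (RInt_scal (V := R_CompleteNormedModule)).
  2:{ apply (ex_RInt_continuous (V := R_CompleteNormedModule)); intros z _.
      apply (continuous_scal_r (K := R_AbsRing) (V := R_NormedModule) (-1)
               (fun y => g (-1 * y + t))).
      apply (continuous_ext (fun y => g (t - y))); [intros; f_equal; ring|].
      apply continuous_kernel_shift. }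
  rewrite (RInt_comp_lin (V := R_CompleteNormedModule)) by apply Hg.
  replace (-1 * 0 + t) with t by ring; replace (-1 * t + t) with 0 by ring.
  rewrite <- (opp_RInt_swap (V := R_CompleteNormedModule)) by apply Hg.
  unfold scal, opp; simpl; unfold mult; simpl; ring.
Qed.

Lemma RInt_kernel_ge0 t : 0 <= t -> 0 <= RInt g 0 t.
Proof.
  intros Ht; apply RInt_ge_0; [lra | |intros; apply g_ge0].
  apply (ex_RInt_continuous (V := R_CompleteNormedModule)); intros; apply g_cont.
Qed.

Lemma ex_RInt_kernel_shift_const t c : ex_RInt (fun s => g (t - s) * c) 0 t.
Proof.
  apply (ex_RInt_continuous (V := R_CompleteNormedModule)); intros x _.
  apply (continuous_mult (K := R_AbsRing));
    [apply continuous_kernel_shift | apply continuous_const].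
Qed.

Lemma conv_le_mul_mass (I : R -> R) t c :
  (forall x, continuous (ext_nonneg I) x) -> 0 <= t ->
  (forall s, 0 <= s <= t -> I s <= c) -> conv g I t <= c * RInt g 0 t.
Proof.
  intros HI Ht Hc; rewrite <- RInt_kernel_shift_mul_const.
  apply RInt_le; [lra | apply ex_RInt_kernel_shift_mul; auto | apply ex_RInt_kernel_shift_const |].
  intros s Hs; apply Rmult_le_compat_l; [apply g_ge0 | apply Hc; lra].
Qed.

Lemma Rabs_Ia_le (I : R -> R) t m :
  (forall x, continuous (ext_nonneg I) x) -> 0 <= t ->
  (forall s, 0 <= s <= t -> Rabs (I s) <= m) -> Rabs (Ia g I t) <= 2 * m.
Proof.
  intros HI Ht Hm; pose proof (g_mass_lt1 t Ht); pose proof (RInt_kernel_ge0 t Ht).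
  assert (Hbetween : forall s, 0 <= s <= t -> - m <= I s <= m)
    by (intros s Hs; apply Rabs_le_between, Hm, Hs).
  assert (Hup : conv g I t <= m * RInt g 0 t)
    by (apply conv_le_mul_mass; auto; intros s Hs; apply Hbetween, Hs).
  assert (Hlow : - m * RInt g 0 t <= conv g I t).
  { rewrite <- RInt_kernel_shift_mul_const; unfold conv.
    apply RInt_le;
      [lra | apply ex_RInt_kernel_shift_const | apply ex_RInt_kernel_shift_mul; auto |].
    intros s Hs; apply Rmult_le_compat_l; [apply g_ge0 | apply Hbetween; lra]. }
  pose proof (Hbetween t ltac:(lra)).
  unfold Ia; apply Rabs_le; nra.
Qed.

Lemma Ia_gt0_of_le_max (I : R -> R) t :
  (forall x, continuous (ext_nonneg I) x) -> 0 <= t ->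
  0 < I t -> (forall s, 0 <= s <= t -> I s <= I t) -> 0 < Ia g I t.
Proof.
  intros HI Ht HIt Hmax; pose proof (conv_le_mul_mass I t (I t) HI Ht Hmax).
  pose proof (g_mass_lt1 t Ht); unfold Ia; nra.
Qed.

Lemma Ia_at0 (I : R -> R) : Ia g I 0 = I 0.
Proof. unfold Ia, conv; rewrite RInt_point; unfold zero; simpl; ring. Qed.

Lemma Ia_eq0 (I : R -> R) t : 0 <= t -> (forall s, 0 <= s <= t -> I s = 0) -> Ia g I t = 0.
Proof.
  intros Ht HI; unfold Ia, conv; rewrite HI by lra.
  rewrite (RInt_ext (V := R_CompleteNormedModule) _ (fun _ => 0)).
  - rewrite RInt_const; unfold scal; simpl; unfold mult; simpl; ring.
  - intros x Hx; rewrite Rmin_left, Rmax_right in Hx by lra; rewrite HI by lra; apply Rmult_0_r.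
Qed.

Section Epidemic.

Variables (M beta : R) (I : R -> R).
Hypothesis M_gt0 : 0 < M.
Hypothesis beta_gt0 : 0 < beta.
Hypothesis I_C1 : C1_on_nonneg_with_deriv I (fun t => beta * (M - I t) * Ia g I t).

Let dI t := beta * (M - I t) * Ia g I t.

Lemma continuous_ext_I x : continuous (ext_nonneg I) x.
Proof.
  destruct I_C1 as [Hd [Hd0 _]]; apply continuous_ext_nonneg.
  - intros t Ht; apply (ex_derive_continuous (V := R_NormedModule)); eexists; apply Hd, Ht.
  - apply (right_continuous_of_right_deriv I (dI 0)), Hd0.
Qed.

Lemma is_derive_ext_I x : 0 < x -> is_derive (ext_nonneg I) x (dI x).
Proof. intros Hx; apply is_derive_ext_nonneg, (proj1 I_C1); exact Hx. Qed.

Lemma I_bounded T : 0 <= T -> exists B, forall s, 0 <= s <= T -> Rabs (I s) <= B.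
Proof.
  intros HT.
  destruct (continuity_ab_maj (fun s => Rabs (ext_nonneg I s)) 0 T HT) as [p [Hp _]].
  { intros c _; apply continuity_pt_filterlim, continuous_Rabs_comp, continuous_ext_I. }
  exists (Rabs (ext_nonneg I p)); intros s Hs; rewrite <- (ext_nonneg_eq I s) by lra; apply Hp, Hs.
Qed.


Lemma continuous_M_sub_ext_I x : continuous (fun s => M - ext_nonneg I s) x.
Proof.
  apply (continuous_minus (V := R_NormedModule)); [apply continuous_const | apply continuous_ext_I].
Qed.

Lemma is_derive_M_sub_ext_I x : 0 < x -> is_derive (fun s => M - ext_nonneg I s) x (- dI x).
Proof.
  intros Hx; replace (- dI x) with (minus zero (dI x))
    by (unfold minus, plus, opp, zero; simpl; ring).
  apply (is_derive_minus (K := R_AbsRing) (V := R_NormedModule));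
    [apply (is_derive_const (K := R_AbsRing) (V := R_NormedModule)) | apply is_derive_ext_I, Hx].
Qed.

Lemma I_eq_M : I 0 = M -> forall t, 0 <= t -> I t = M.
Proof.
  intros HI0 t Ht; rewrite <- (ext_nonneg_eq I t) by exact Ht.
  enough (M - ext_nonneg I t = 0) by lra.
  apply (eq0_of_deriv_dominated _ (fun s => - dI s) continuous_M_sub_ext_I is_derive_M_sub_ext_I);
    [rewrite ext_nonneg_eq; lra | | exact Ht].
  intros T HT; destruct (I_bounded T HT) as [B HB]; exists (beta * (2 * B)).
  intros s m Hs Hm; specialize (Hm s ltac:(lra)); rewrite ext_nonneg_eq in Hm by lra.
  unfold dI; rewrite Rabs_Ropp, !Rabs_mult, (Rabs_pos_eq beta) by lra.
  pose proof (Rabs_Ia_le I s B continuous_ext_I ltac:(lra) ltac:(intros; apply HB; lra)).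
  pose proof (Rabs_pos (M - I s)); pose proof (Rabs_pos (Ia g I s)).
  assert (Rabs (M - I s) * Rabs (Ia g I s) <= m * (2 * B)) by (apply Rmult_le_compat; lra).
  nra.
Qed.

Lemma I_eq_0 : I 0 = 0 -> forall t, 0 <= t -> I t = 0.
Proof.
  intros HI0 t Ht; rewrite <- (ext_nonneg_eq I t) by exact Ht.
  apply (eq0_of_deriv_dominated (ext_nonneg I) dI continuous_ext_I is_derive_ext_I); auto.
  { rewrite ext_nonneg_eq; lra. }
  intros T HT; destruct (I_bounded T HT) as [B HB]; exists (beta * (M + B) * 2).
  intros s m Hs Hm.
  assert (Hm' : forall s', 0 <= s' <= s -> Rabs (I s') <= m)
    by (intros s' Hs'; rewrite <- (ext_nonneg_eq I s') by lra; apply Hm, Hs').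
  pose proof (Rabs_Ia_le I s m continuous_ext_I ltac:(lra) Hm').
  assert (Rabs (M - I s) <= M + B).
  { unfold Rminus; apply Rle_trans with (Rabs M + Rabs (- I s)); [apply Rabs_triang|].
    rewrite Rabs_Ropp, (Rabs_pos_eq M) by lra; pose proof (HB s Hs); lra. }
  unfold dI; rewrite !Rabs_mult, (Rabs_pos_eq beta) by lra.
  pose proof (Rabs_pos (M - I s)); pose proof (Rabs_pos (Ia g I s)).
  assert (Rabs (M - I s) * Rabs (Ia g I s) <= (M + B) * (2 * m)) by (apply Rmult_le_compat; lra).
  nra.
Qed.

Lemma I_lt_M : I 0 < M -> forall t, 0 <= t -> I t < M.
Proof.
  intros HI0 t Ht; rewrite <- (ext_nonneg_eq I t) by exact Ht.
  enough (0 < M - ext_nonneg I t) by lra.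
  apply (gt0_of_deriv_ge_neg_mul _ (fun s => - dI s) continuous_M_sub_ext_I is_derive_M_sub_ext_I);
    [rewrite ext_nonneg_eq; lra | | exact Ht].
  intros T HT; destruct (I_bounded T HT) as [B HB]; exists (beta * (2 * B)).
  intros s Hs Hpos; rewrite ext_nonneg_eq in * by lra.
  pose proof (Rabs_Ia_le I s B continuous_ext_I ltac:(lra) ltac:(intros; apply HB; lra)).
  pose proof (Rle_abs (Ia g I s)); assert (0 <= beta * (M - I s)) by nra; unfold dI; nra.
Qed.

Lemma continuous_Ia_of_lt_M :
  (forall t, 0 <= t -> I t < M) -> forall t, 0 < t -> continuous (Ia g I) t.
Proof.
  intros HIM t Ht; destruct I_C1 as [Hd [_ [HdIc _]]].
  (* the convolution inherits continuity from the equation: Ia = I' / (beta (M - I)) *)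
  apply continuous_ext_loc with (fun s => dI s / (beta * (M - I s))).
  { apply locally_interval with 0 p_infty; simpl; auto.
    intros y Hy _; pose proof (HIM y ltac:(lra)); unfold dI; field; lra. }
  apply continuity_pt_filterlim, (continuity_pt_div dI (fun s => beta * (M - I s)));
    try apply continuity_pt_filterlim.
  - apply HdIc, Ht.
  - apply (continuous_mult (K := R_AbsRing) (fun _ => beta) (fun s => M - I s));
      [apply continuous_const|].
    apply (continuous_minus (V := R_NormedModule) (fun _ => M) I); [apply continuous_const|].
    apply (ex_derive_continuous (V := R_NormedModule)); eexists; apply Hd, Ht.
  - pose proof (HIM t ltac:(lra)); apply Rgt_not_eq, Rmult_lt_0_compat; lra.
Qed.

Lemma Ia_gt0_near0 : 0 < I 0 < M -> at_right 0 (fun s => 0 < Ia g I s).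
Proof.
  intros HI0; destruct I_C1 as [_ [_ [_ HdI0]]].
  assert (HdIpos : 0 < dI 0) by (unfold dI; rewrite Ia_at0; apply Rmult_lt_0_compat; nra).
  apply (filter_imp (fun s => 0 < s /\ 0 < dI s)).
  - intros s [Hs HdIs]; pose proof (I_lt_M (proj2 HI0) s ltac:(lra)); unfold dI in HdIs.
    destruct (Rle_or_lt (Ia g I s) 0); [|assumption].
    assert (0 <= beta * (M - I s)) by nra; nra.
  - apply filter_and; [exists (mkposreal 1 Rlt_0_1); auto|].
    apply (filterlim_gt0 _ dI (dI 0) HdI0 HdIpos).
Qed.

Lemma Ia_gt0_of_lt_M : 0 < I 0 < M -> forall t, 0 <= t -> 0 < Ia g I t.
Proof.
  intros HI0 t1 Ht1; apply Rnot_le_lt; intros HIat1.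
  pose proof (I_lt_M (proj2 HI0)) as HIM.
  destruct (first_root (Ia g I) t1) as [ts [Hts [HIats Hbefore]]]; auto.
  { rewrite Ia_at0; lra. }
  { apply Ia_gt0_near0, HI0. }
  { intros t Ht; apply continuous_Ia_of_lt_M; auto; lra. }
  (* as Ia >= 0 on [0, ts], so is I' *)
  assert (Hmono : forall s, 0 <= s <= ts -> I s <= I ts).
  { intros s Hs; rewrite <- (ext_nonneg_eq I s), <- (ext_nonneg_eq I ts) by lra.
    apply (le_of_deriv_ge0 _ dI); [lra | intros; apply is_derive_ext_I; lra
                                  | intros; apply continuous_ext_I |].
    intros x Hx; pose proof (HIM x ltac:(lra)).
    assert (0 <= Ia g I x) by (destruct (Req_dec x ts) as [->|]; [lra | left; apply Hbefore; lra]).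
    unfold dI; apply Rmult_le_pos; [nra | assumption]. }
  enough (0 < Ia g I ts) by lra.
  apply Ia_gt0_of_le_max; [apply continuous_ext_I | lra | | exact Hmono].
  pose proof (Hmono 0 ltac:(lra)); lra.
Qed.

Lemma Ia_gt0 : 0 < I 0 <= M -> forall t, 0 <= t -> 0 < Ia g I t.
Proof.
  intros [HI0 [HltM | HeqM]] t Ht; [apply Ia_gt0_of_lt_M; auto|].
  apply Ia_gt0_of_le_max; [apply continuous_ext_I | exact Ht | |].
  - rewrite I_eq_M; auto.
  - intros s Hs; rewrite !I_eq_M by (auto; lra); lra.
Qed.

Lemma Ia_eq0_of_I0_eq0 : I 0 = 0 -> forall t, 0 <= t -> Ia g I t = 0.
Proof. intros HI0 t Ht; apply Ia_eq0; [exact Ht|]; intros s Hs; apply I_eq_0; auto; lra. Qed.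

End Epidemic.

End Kernel.

(** * The Gaussian integral *)

Definition gauss (w : R) : R := exp (- (w * w)).

Definition gauss_int (x : R) : R := RInt gauss 0 x.

(* The classical trick: [gauss_int x ^ 2 + gauss_aux x] has derivative zero,
   hence is constantly equal to its value [atan 1 = PI / 4] at [0]. *)
Definition gauss_param (u t : R) : R := exp (- (u * u * (1 + t * t))) / (1 + t * t).

Definition gauss_aux (x : R) : R := RInt (gauss_param x) 0 1.

Lemma one_add_sqr_gt0 t : 0 < 1 + t * t.
Proof. nra. Qed.

Lemma gauss_continuous w : continuous gauss w.
Proof. apply (ex_derive_continuous (V := R_NormedModule)); unfold gauss; auto_derive; auto. Qed.

Lemma ex_RInt_gauss a b : ex_RInt gauss a b.
Proof.
  apply (ex_RInt_continuous (V := R_CompleteNormedModule)); intros; apply gauss_continuous.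
Qed.

Lemma is_derive_gauss_int x : is_derive gauss_int x (gauss x).
Proof.
  apply is_derive_RInt with 0.
  - apply filter_forall; intros b.
    apply (RInt_correct (V := R_CompleteNormedModule)), ex_RInt_gauss.
  - apply gauss_continuous.
Qed.

Lemma RInt_gauss a b : RInt gauss a b = gauss_int b - gauss_int a.
Proof.
  rewrite <- (RInt_Chasles (V := R_CompleteNormedModule) gauss a 0 b)
    by apply ex_RInt_gauss.
  rewrite <- (opp_RInt_swap (V := R_CompleteNormedModule)) by apply ex_RInt_gauss.
  unfold gauss_int, plus, opp; simpl; ring.
Qed.

Lemma gauss_param_continuous u t : continuous (gauss_param u) t.
Proof.
  apply (ex_derive_continuous (V := R_NormedModule)); unfold gauss_param.
  auto_derive; pose proof (one_add_sqr_gt0 t); lra.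
Qed.

Lemma ex_RInt_gauss_param u a b : ex_RInt (gauss_param u) a b.
Proof.
  apply (ex_RInt_continuous (V := R_CompleteNormedModule)); intros.
  apply gauss_param_continuous.
Qed.

Lemma Derive_gauss_param u t :
  Derive (fun v => gauss_param v t) u = -2 * u * exp (- (u * u * (1 + t * t))).
Proof.
  apply is_derive_unique; unfold gauss_param; pose proof (one_add_sqr_gt0 t).
  auto_derive; [lra|]; field; lra.
Qed.

Lemma continuity_2d_Derive_gauss_param u t :
  continuity_2d_pt (fun u t => Derive (fun v => gauss_param v t) u) u t.
Proof.
  apply continuity_2d_pt_ext with
    (fun u v => (-2 * u) * exp (- (u * u * (1 + v * v)))).
  { intros; rewrite Derive_gauss_param; ring. }
  apply (continuity_2d_pt_mult (fun u v => -2 * u)).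
  - apply (continuity_2d_pt_mult (fun u v => -2) (fun u v => u)).
    + apply continuity_2d_pt_const.
    + apply continuity_2d_pt_id1.
  - apply (continuity_1d_2d_pt_comp exp).
    { apply continuity_pt_filterlim, continuous_exp. }
    apply continuity_2d_pt_opp, (continuity_2d_pt_mult (fun u v => u * u)).
    + apply (continuity_2d_pt_mult (fun u v => u)); apply continuity_2d_pt_id1.
    + apply (continuity_2d_pt_plus (fun u v => 1)); [apply continuity_2d_pt_const|].
      apply (continuity_2d_pt_mult (fun u v => v)); apply continuity_2d_pt_id2.
Qed.

Lemma is_derive_gauss_aux x : is_derive gauss_aux x (-2 * gauss x * gauss_int x).
Proof.
  replace (-2 * gauss x * gauss_int x)
    with (RInt (fun t => Derive (fun u => gauss_param u t) x) 0 1).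
  { apply is_derive_RInt_param.
    - apply filter_forall; intros u t _; unfold gauss_param.
      auto_derive; pose proof (one_add_sqr_gt0 t); lra.
    - intros t _; apply continuity_2d_Derive_gauss_param.
    - apply filter_forall; intros; apply ex_RInt_gauss_param. }
  (* substitution w = x t *)
  rewrite (RInt_ext _ (fun t => scal (-2 * gauss x) (scal x (gauss (x * t + 0))))).
  2:{ intros t _; rewrite Derive_gauss_param; unfold gauss, scal; simpl; unfold mult; simpl.
      replace (- (x * x * (1 + t * t)))
        with (- (x * x) + - ((x * t + 0) * (x * t + 0))) by ring.
      rewrite exp_plus; ring. }
  rewrite (RInt_scal (V := R_CompleteNormedModule)).
  2:{ apply (ex_RInt_continuous (V := R_CompleteNormedModule)); intros z _.
      apply (ex_derive_continuous (V := R_NormedModule)).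
      unfold gauss, scal; simpl; unfold mult; simpl; auto_derive; auto. }
  rewrite (RInt_comp_lin (V := R_CompleteNormedModule)) by apply ex_RInt_gauss.
  unfold gauss_int, scal; simpl; unfold mult; simpl.
  do 3 f_equal; ring.
Qed.

Lemma gauss_int_sqr_add_aux x : gauss_int x * gauss_int x + gauss_aux x = PI / 4.
Proof.
  set (F := fun x => gauss_int x * gauss_int x + gauss_aux x).
  assert (HF : forall x, is_derive F x 0).
  { intros y; replace 0 with
      (gauss y * gauss_int y + gauss_int y * gauss y + -2 * gauss y * gauss_int y) by ring.
    apply (is_derive_plus (K := R_AbsRing) (V := R_NormedModule)).
    - apply (is_derive_mult gauss_int gauss_int); try apply is_derive_gauss_int.
      intros; apply Rmult_comm.
    - apply is_derive_gauss_aux. }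
  change (F x = PI / 4); replace (F x) with (F 0).
  2:{ destruct (MVT_gen F 0 x (fun _ => 0)) as [c [_ Hc]]; [intros; apply HF| |lra].
      intros; apply continuity_pt_filterlim, (ex_derive_continuous (V := R_NormedModule)).
      eexists; apply HF. }
  unfold F, gauss_int, gauss_aux; rewrite RInt_point; unfold zero; simpl.
  rewrite Rmult_0_l, Rplus_0_l, <- atan_1.
  replace (atan 1) with (atan 1 - atan 0) by (rewrite atan_0; ring).
  apply is_RInt_unique, (is_RInt_ext (fun t => / (1 + t²))).
  { intros t _; unfold gauss_param, Rsqr.
    change (@eq R (/ (1 + t * t)) (exp (- (0 * 0 * (1 + t * t))) / (1 + t * t))).
    replace (- (0 * 0 * (1 + t * t))) with 0 by ring; rewrite exp_0; unfold Rdiv; ring. }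
  apply (is_RInt_derive atan); [intros; apply is_derive_atan|].
  intros t _; apply (ex_derive_continuous (V := R_NormedModule)).
  auto_derive; unfold Rsqr; pose proof (one_add_sqr_gt0 t); lra.
Qed.

Lemma gauss_aux_gt0 x : 0 < gauss_aux x.
Proof.
  apply RInt_gt_0; [lra| |intros; apply gauss_param_continuous].
  intros t _; apply Rdiv_lt_0_compat; [apply exp_pos|apply one_add_sqr_gt0].
Qed.

Lemma Rabs_gauss_int_lt x : Rabs (gauss_int x) < sqrt PI / 2.
Proof.
  pose proof (gauss_int_sqr_add_aux x); pose proof (gauss_aux_gt0 x).
  pose proof PI_RGT_0; pose proof (sqrt_sqrt PI); pose proof (sqrt_lt_R0 PI).
  apply Rsqr_incrst_0; [| apply Rabs_pos | lra].
  rewrite <- Rsqr_abs; unfold Rsqr; nra.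
Qed.

(** * The log-normal density *)

(* value of the density at its mode exp (mu - sigma ^ 2) *)
Definition lognormal_max (mu sigma : R) : R :=
  exp (sigma ^ 2 / 2 - mu) / (sigma * sqrt (2 * PI)).

Lemma sqrt_2PI_gt0 : 0 < sqrt (2 * PI).
Proof. apply sqrt_lt_R0; pose proof PI_RGT_0; lra. Qed.

Lemma lognormal_max_gt0 mu sigma : 0 < sigma -> 0 < lognormal_max mu sigma.
Proof.
  intros Hs; pose proof sqrt_2PI_gt0.
  apply Rdiv_lt_0_compat; [apply exp_pos | nra].
Qed.

Lemma lognormal_le0 mu sigma t : t <= 0 -> lognormal mu sigma t = 0.
Proof. intros Ht; unfold lognormal; destruct (Rle_dec t 0); lra. Qed.

Lemma lognormal_gt0_eq mu sigma y : 0 < sigma -> 0 < y ->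
  lognormal mu sigma y =
  exp (sigma ^ 2 / 2 - mu - (ln y - mu + sigma ^ 2) ^ 2 / (2 * sigma ^ 2))
    / (sigma * sqrt (2 * PI)).
Proof.
  intros Hs Hy; unfold lognormal; destruct (Rle_dec y 0) as [H|H]; [lra|].
  pose proof sqrt_2PI_gt0.
  replace (sigma ^ 2 / 2 - mu - (ln y - mu + sigma ^ 2) ^ 2 / (2 * sigma ^ 2))
    with (- ln y + (- (ln y - mu) ^ 2 / (2 * sigma ^ 2))) by (field; lra).
  rewrite exp_plus, exp_Ropp, exp_ln by lra.
  field; repeat split; lra.
Qed.

Lemma lognormal_ge0 mu sigma t : 0 < sigma -> 0 <= lognormal mu sigma t.
Proof.
  intros Hs; destruct (Rle_dec t 0) as [Ht|Ht]; [rewrite lognormal_le0; lra|].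
  rewrite lognormal_gt0_eq by lra; pose proof sqrt_2PI_gt0.
  apply Rdiv_le_0_compat; [left; apply exp_pos | nra].
Qed.


Lemma lognormal_mul_le_max mu sigma y : 0 < sigma -> 0 < y ->
  lognormal mu sigma y * (1 + (ln y - mu + sigma ^ 2) ^ 2 / (2 * sigma ^ 2))
  <= lognormal_max mu sigma.
Proof.
  intros Hs Hy; rewrite lognormal_gt0_eq by lra; unfold lognormal_max.
  set (w := (ln y - mu + sigma ^ 2) ^ 2 / (2 * sigma ^ 2)).
  rewrite Rminus_def, exp_plus, exp_Ropp.
  pose proof (exp_ineq1_le w); pose proof (exp_pos w); pose proof sqrt_2PI_gt0.
  assert (Hw : / exp w * (1 + w) <= 1).
  { apply Rmult_le_reg_l with (exp w); [lra|].
    rewrite <- Rmult_assoc, Rinv_r; lra. }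
  set (c := exp (sigma ^ 2 / 2 - mu) / (sigma * sqrt (2 * PI))).
  assert (0 < c) by (apply Rdiv_lt_0_compat; [apply exp_pos | nra]).
  replace (exp (sigma ^ 2 / 2 - mu) * / exp w / (sigma * sqrt (2 * PI)) * (1 + w))
    with (c * (/ exp w * (1 + w))) by (unfold c; field; split; lra).
  nra.
Qed.

Lemma lognormal_le_max mu sigma t : 0 < sigma -> lognormal mu sigma t <= lognormal_max mu sigma.
Proof.
  intros Hs; destruct (Rle_dec t 0) as [Ht|Ht].
  { rewrite lognormal_le0 by exact Ht; left; apply lognormal_max_gt0, Hs. }
  apply Rnot_le_lt in Ht; pose proof (lognormal_mul_le_max mu sigma t Hs Ht).
  pose proof (lognormal_ge0 mu sigma t Hs); pose proof (pow_lt sigma 2 Hs).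
  assert (0 <= (ln t - mu + sigma ^ 2) ^ 2 / (2 * sigma ^ 2))
    by (apply Rdiv_le_0_compat; [apply pow2_ge_0 | lra]).
  nra.
Qed.

Lemma lognormal_near0 mu sigma eps : 0 < sigma -> 0 < eps ->
  exists d, 0 < d /\ forall y, 0 < y < d -> lognormal mu sigma y < eps.
Proof.
  intros Hs He; pose proof (pow_lt sigma 2 Hs) as Hs2.
  pose proof (lognormal_max_gt0 mu sigma Hs) as HC; set (C := lognormal_max mu sigma) in *.
  set (A := 2 * sigma ^ 2 * C / eps + 1).
  assert (HA : eps * (A - 1) = 2 * sigma ^ 2 * C) by (unfold A; field; lra).
  assert (HA1 : 1 <= A).
  { assert (0 <= 2 * sigma ^ 2 * C / eps); [|unfold A; lra].
    apply Rdiv_le_0_compat; nra. }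
  exists (exp (mu - sigma ^ 2 - A)); split; [apply exp_pos|].
  intros y Hy; pose proof (lognormal_mul_le_max mu sigma y Hs (proj1 Hy)) as Hmul; fold C in Hmul.
  assert (Hz : ln y - mu + sigma ^ 2 < - A).
  { enough (ln y < mu - sigma ^ 2 - A) by lra.
    rewrite <- (ln_exp (mu - sigma ^ 2 - A)); apply ln_increasing; lra. }
  set (w := (ln y - mu + sigma ^ 2) ^ 2 / (2 * sigma ^ 2)) in *.
  assert (Hw : C < eps * w).
  { unfold w; apply Rmult_lt_reg_r with (2 * sigma ^ 2); [lra|].
    replace (eps * ((ln y - mu + sigma ^ 2) ^ 2 / (2 * sigma ^ 2)) * (2 * sigma ^ 2))
      with (eps * (ln y - mu + sigma ^ 2) ^ 2) by (field; lra).
    assert (A - 1 < (ln y - mu + sigma ^ 2) ^ 2) by nra.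
    nra. }
  pose proof (lognormal_ge0 mu sigma y Hs).
  assert (0 <= w) by (unfold w; apply Rdiv_le_0_compat; [apply pow2_ge_0 | lra]).
  nra.
Qed.

Lemma lognormal_continuous mu sigma t : 0 < sigma -> continuous (lognormal mu sigma) t.
Proof.
  intros Hs; pose proof sqrt_2PI_gt0.
  destruct (Rtotal_order t 0) as [Ht|[->|Ht]].
  - apply continuous_ext_loc with (fun _ => 0); [|apply continuous_const].
    apply locally_interval with m_infty 0; simpl; auto.
    intros y _ Hy; rewrite lognormal_le0; lra.
  - apply continuity_pt_filterlim; intros eps He.
    destruct (lognormal_near0 mu sigma eps Hs He) as [d [Hd Hsmall]].
    exists d; split; auto; intros x [_ Hx]; simpl in *; unfold R_dist in *.
    rewrite (lognormal_le0 mu sigma 0), Rminus_0_r, Rabs_pos_eq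
      by (try apply lognormal_ge0; lra).
    rewrite Rminus_0_r in Hx.
    destruct (Rle_dec x 0) as [Hx0|Hx0]; [rewrite lognormal_le0; lra|].
    apply Hsmall; rewrite Rabs_pos_eq in Hx; lra.
  - apply continuous_ext_loc with
      (fun s => / (s * sigma * sqrt (2 * PI)) * exp (- (ln s - mu) ^ 2 / (2 * sigma ^ 2))).
    + apply locally_interval with 0 p_infty; simpl; auto.
      intros y Hy _; unfold lognormal; destruct (Rle_dec y 0); [lra | reflexivity].
    + apply (ex_derive_continuous (V := R_NormedModule)); auto_derive.
      repeat split; try lra; apply Rgt_not_eq, Rmult_gt_0_compat; nra.
Qed.

Lemma ex_RInt_lognormal mu sigma a b : 0 < sigma -> ex_RInt (lognormal mu sigma) a b.
Proof.
  intros Hs; apply (ex_RInt_continuous (V := R_CompleteNormedModule)); intros.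
  apply lognormal_continuous, Hs.
Qed.

Lemma RInt_lognormal_exp mu sigma a b : 0 < sigma ->
  RInt (lognormal mu sigma) (exp (mu + sigma * sqrt 2 * a)) (exp (mu + sigma * sqrt 2 * b))
  = (gauss_int b - gauss_int a) / sqrt PI.
Proof.
  intros Hs; pose proof PI_RGT_0.
  assert (Hs2 : 0 < sqrt 2) by (apply sqrt_lt_R0; lra).
  assert (HsP : 0 < sqrt PI) by (apply sqrt_lt_R0; lra).
  assert (H2 : sqrt 2 * sqrt 2 = 2) by (apply sqrt_sqrt; lra).
  assert (H2P : sqrt (2 * PI) = sqrt 2 * sqrt PI) by (apply sqrt_mult; lra).
  rewrite <- (RInt_comp (V := R_CompleteNormedModule) (lognormal mu sigma)
     (fun w => exp (mu + sigma * sqrt 2 * w))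
     (fun w => sigma * sqrt 2 * exp (mu + sigma * sqrt 2 * w))).
  - rewrite (RInt_ext (V := R_CompleteNormedModule) _ (fun y => scal (/ sqrt PI) (gauss y))).
    + rewrite (RInt_scal (V := R_CompleteNormedModule)) by apply ex_RInt_gauss.
      rewrite RInt_gauss; unfold scal; simpl; unfold mult; simpl; unfold Rdiv; ring.
    + intros y _; unfold scal; simpl; unfold mult; simpl.
      rewrite lognormal_gt0_eq, ln_exp by (auto; apply exp_pos).
      replace (sigma ^ 2 / 2 - mu - (mu + sigma * sqrt 2 * y - mu + sigma ^ 2) ^ 2
                 / (2 * sigma ^ 2))
        with (- (y * y) + - (mu + sigma * sqrt 2 * y)).
      2:{ replace ((mu + sigma * sqrt 2 * y - mu + sigma ^ 2) ^ 2) with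
            ((sigma * y) ^ 2 * (sqrt 2 * sqrt 2) + 2 * sigma ^ 3 * sqrt 2 * y + sigma ^ 4)
            by ring.
          rewrite H2; field; lra. }
      rewrite (exp_plus (- (y * y))), (exp_Ropp (mu + sigma * sqrt 2 * y)), H2P.
      unfold gauss.
      pose proof (exp_pos (mu + sigma * sqrt 2 * y)).
      field; repeat split; lra.
  - intros; apply lognormal_continuous, Hs.
  - intros x _; split.
    + auto_derive; auto; ring.
    + apply (ex_derive_continuous (V := R_NormedModule)); auto_derive; auto.
Qed.

Lemma exp_lognormal_coord mu sigma x : 0 < sigma -> 0 < x ->
  exp (mu + sigma * sqrt 2 * ((ln x - mu) / (sigma * sqrt 2))) = x.
Proof.
  intros Hs Hx; assert (0 < sqrt 2) by (apply sqrt_lt_R0; lra).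
  rewrite <- (exp_ln x) at 2 by lra; f_equal; field; lra.
Qed.

Lemma RInt_lognormal_le mu sigma e : 0 < sigma -> 0 <= e ->
  RInt (lognormal mu sigma) 0 e <= lognormal_max mu sigma * e.
Proof.
  intros Hs He; apply Rle_trans with (RInt (fun _ => lognormal_max mu sigma) 0 e).
  - apply RInt_le; [lra | apply ex_RInt_lognormal, Hs | apply ex_RInt_const |].
    intros; apply lognormal_le_max, Hs.
  - rewrite RInt_const; unfold scal; simpl; unfold mult; simpl; lra.
Qed.

Lemma RInt_lognormal_lt1 mu sigma t : 0 < sigma -> 0 <= t -> RInt (lognormal mu sigma) 0 t < 1.
Proof.
  intros Hs Ht; destruct (Req_dec t 0) as [->|Ht0].
  { rewrite RInt_point; unfold zero; simpl; lra. }
  pose proof PI_RGT_0.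
  assert (HsP : 0 < sqrt PI) by (apply sqrt_lt_R0; lra).
  set (b := (ln t - mu) / (sigma * sqrt 2)).
  set (eta := / 2 - gauss_int b / sqrt PI).
  assert (Heta : 0 < eta).
  { pose proof (Rabs_gauss_int_lt b); pose proof (Rle_abs (gauss_int b)).
    enough (gauss_int b / sqrt PI < / 2) by (unfold eta; lra).
    apply (Rmult_lt_reg_r (sqrt PI)); [lra|]; field_simplify; lra. }
  pose proof (lognormal_max_gt0 mu sigma Hs) as HC.
  set (C := lognormal_max mu sigma) in *.
  (* the head [0, e] contributes at most C e <= eta / 2, the tail [e, t] is a
     Gaussian increment smaller than 1 - eta *)
  set (e := Rmin (t / 2) (eta / (2 * C))).
  assert (He : 0 < e) by (unfold e; apply Rmin_pos; [lra | apply Rdiv_lt_0_compat; lra]).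
  assert (Het : e < t) by (unfold e; pose proof (Rmin_l (t / 2) (eta / (2 * C))); lra).
  assert (HCe : C * e <= eta / 2).
  { replace (eta / 2) with (C * (eta / (2 * C))) by (field; lra).
    apply Rmult_le_compat_l; [lra | apply Rmin_r]. }
  set (a := (ln e - mu) / (sigma * sqrt 2)).
  rewrite <- (RInt_Chasles (V := R_CompleteNormedModule) _ 0 e t)
    by apply ex_RInt_lognormal, Hs.
  unfold plus; simpl.
  rewrite <- (exp_lognormal_coord mu sigma e) at 2 by lra.
  rewrite <- (exp_lognormal_coord mu sigma t) by lra.
  fold a b; rewrite RInt_lognormal_exp by exact Hs.
  pose proof (RInt_lognormal_le mu sigma e Hs ltac:(lra)) as Hhead; fold C in Hhead.
  assert (Htail : (gauss_int b - gauss_int a) / sqrt PI < 1 - eta).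
  { pose proof (Rabs_gauss_int_lt a); pose proof (Rle_abs (- gauss_int a)).
    rewrite Rabs_Ropp in *; unfold eta.
    apply (Rmult_lt_reg_r (sqrt PI)); [lra|]; field_simplify; lra. }
  lra.
Qed.

Theorem proposition3p6 (M beta mu sigma I0 : R) (I : R -> R) :
  0 < M -> 0 < beta -> 0 < sigma ->
  0 <= I0 <= M ->
  I 0 = I0 ->
  C1_on_nonneg_with_deriv I
    (fun t => beta * (M - I t) * Ia (lognormal mu sigma) I t) ->
  (0 < I0 <= M -> forall t, 0 <= t -> 0 < Ia (lognormal mu sigma) I t) /\
  (I0 = 0 -> forall t, 0 <= t -> Ia (lognormal mu sigma) I t = 0).
Proof.
  intros HM Hbeta Hsigma _ <- HI.
  assert (Hg_cont : forall t, continuous (lognormal mu sigma) t)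
    by (intros; apply lognormal_continuous, Hsigma).
  assert (Hg_ge0 : forall t, 0 <= lognormal mu sigma t)
    by (intros; apply lognormal_ge0, Hsigma).
  assert (Hg_mass : forall t, 0 <= t -> RInt (lognormal mu sigma) 0 t < 1)
    by (intros; apply RInt_lognormal_lt1; assumption).
  split.
  - apply (Ia_gt0 _ Hg_cont Hg_ge0 Hg_mass M beta); auto.
  - apply (Ia_eq0_of_I0_eq0 _ Hg_cont Hg_ge0 Hg_mass M beta); auto.
Qed.
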